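(* Let $(V,\nu,\tau,\tau^* )$ be a PN space in which $\nu(V)\subseteq D^+$ and $D^+$ is invariant under $\tau$, i.e. $\tau(D^+\times D^+)\subseteq D^+$. If $(p_m)$ is a sequence in $V$ strongly converging to $p\in V$ and $A=\{p_m: m\in\mathbb{N}\}$, then $A$ is a $D$-bounded subset of $V$.
   Context: $\Delta^{+}$ is the set of functions $F:[-\infty,+\infty]\to[0,1]$ that are left-continuous on $\mathbb{R}$, nondecreasing, with $F(0)=0$ and $F(+\infty)=1$, ordered pointwise; $D^{+}=\{F\in\Delta^{+}: l^{-}F(+\infty)=1\}$, where $l^{-}f(x)=\lim_{t\to x^{-}}f(t)$. $\varepsilon_0$ is the d.f. equal to $0$ for $x\le0$ and $1$ for $x>0$. A triangle function is a map $\tau:\Delta^+\times\Delta^+\to\Delta^+$ that is associative, commutative, nondecreasing in each argument, with unit $\varepsilon_0$. A PN space is a quadruple $(V,\nu,\tau,\tau^* )$ with $V$ a real vector space, $\tau\le\tau^*$ continuous triangle functions, and $\nu:V\to\Delta^+$ such that for all $p,q\in V$: (N1) $\nu_p=\varepsilon_0$ iff $p=\theta$; (N2) $\nu_{-p}=\nu_p$; (N3) $\nu_{p+q}\ge\tau(\nu_p,\nu_q)$; (N4) $\nu_p\le\tau^*(\nu_{\lambda p},\nu_{(1-\lambda)p})$ for all $\lambda\in[0,1]$. A sequence $(p_m)$ strongly converges to $p$ if for every $\lambda>0$ there is $N$ with $\nu_{p_m-p}(\lambda)>1-\lambda$ for $m\ge N$. For nonempty $A\subseteq V$, $R_A(x)=l^{-}\inf\{\nu_q(x):q\in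 A\}$ for $x\in[0,+\infty)$ and $R_A(+\infty)=1$; $A$ is $D$-bounded if $R_A\in D^+$. *)

From Stdlib Require Import Reals Lra.
From Coquelicot Require Import Coquelicot.
Open Scope R_scope.

(* A distance distribution function on the extended reals [-oo,+oo]. *)
Definition dfun := Rbar -> R.

Definition dle (F G : dfun) : Prop := forall x : Rbar, F x <= G x.
Definition deq (F G : dfun) : Prop := forall x : Rbar, F x = G x.

Definition in_Delta (F : dfun) : Prop :=
  (forall x : Rbar, 0 <= F x <= 1) /\
  (forall x y : Rbar, Rbar_le x y -> F x <= F y) /\
  (forall x : R, filterlim (fun t : R => F (Finite t)) (at_left x) (locally (F (Finite x)))) /\
  F (Finite 0) = 0 /\
  F p_infty = 1.

Definition in_Dplus (F : dfun) : Prop :=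
  in_Delta F /\
  filterlim (fun t : R => F (Finite t)) (Rbar_locally p_infty) (locally 1).

Definition eps0 : dfun := fun x =>
  match x with
  | Finite r => if Rle_dec r 0 then 0 else 1
  | p_infty => 1
  | m_infty => 0
  end.

(* Weak convergence in Delta^+ (convergence at every continuity point of the
   limit); on Delta^+ it is the convergence of the modified Levy metric. *)
Definition weak_cv (Fn : nat -> dfun) (F : dfun) : Prop :=
  forall x : R, continuous (fun t : R => F (Finite t)) x ->
    filterlim (fun n => Fn n (Finite x)) eventually (locally (F (Finite x))).

Definition triangle_function (tau : dfun -> dfun -> dfun) : Prop :=
  (forall F G, in_Delta F -> in_Delta G -> in_Delta (tau F G)) /\
  (forall F G H, in_Delta F -> in_Delta G -> in_Delta H ->
      deq (tau (tau F G) H) (tau F (tau G H))) /\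
  (forall F G, in_Delta F -> in_Delta G -> deq (tau F G) (tau G F)) /\
  (forall F F' G, in_Delta F -> in_Delta F' -> in_Delta G -> dle F F' ->
      dle (tau F G) (tau F' G)) /\
  (forall F, in_Delta F -> deq (tau F eps0) F).

(* Continuity of a triangle function w.r.t. the (metrizable) topology of
   weak convergence on Delta^+ ; stated sequentially. *)
Definition tf_continuous (tau : dfun -> dfun -> dfun) : Prop :=
  forall (Fn Gn : nat -> dfun) (F G : dfun),
    (forall n, in_Delta (Fn n)) -> (forall n, in_Delta (Gn n)) ->
    in_Delta F -> in_Delta G ->
    weak_cv Fn F -> weak_cv Gn G ->
    weak_cv (fun n => tau (Fn n) (Gn n)) (tau F G).

Definition PN_space (V : ModuleSpace R_Ring) (nu : V -> dfun)
    (tau tau_star : dfun -> dfun -> dfun) : Prop :=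
  triangle_function tau /\ tf_continuous tau /\
  triangle_function tau_star /\ tf_continuous tau_star /\
  (forall F G, in_Delta F -> in_Delta G -> dle (tau F G) (tau_star F G)) /\
  (forall p : V, in_Delta (nu p)) /\
  (forall p : V, deq (nu p) eps0 <-> p = zero) /\
  (forall p : V, deq (nu (opp p)) (nu p)) /\
  (forall p q : V, dle (tau (nu p) (nu q)) (nu (plus p q))) /\
  (forall (p : V) (l : R), 0 <= l <= 1 ->
      dle (nu p) (tau_star (nu (scal l p)) (nu (scal (1 - l) p)))).

Definition strongly_converges (V : ModuleSpace R_Ring) (nu : V -> dfun)
    (pm : nat -> V) (p : V) : Prop :=
  forall l : R, 0 < l -> exists N : nat, forall m : nat, (N <= m)%nat ->
    nu (minus (pm m) p) (Finite l) > 1 - l.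

Definition inf_nu (V : ModuleSpace R_Ring) (nu : V -> dfun) (A : V -> Prop)
    (x : R) : R :=
  real (Glb_Rbar (fun y => exists q, A q /\ y = nu q (Finite x))).

(* R is the probabilistic radius R_A: R_A(x) = l^- inf_nu(x) for x in [0,+oo),
   R_A(+oo) = 1, and (convention) R_A = 0 on [-oo,0). *)
Definition is_radius (V : ModuleSpace R_Ring) (nu : V -> dfun) (A : V -> Prop)
    (RA : dfun) : Prop :=
  (forall x : R, 0 <= x ->
     filterlim (inf_nu V nu A) (at_left x) (locally (RA (Finite x)))) /\
  RA p_infty = 1 /\
  (forall x : R, x < 0 -> RA (Finite x) = 0) /\
  RA m_infty = 0.

Definition D_bounded (V : ModuleSpace R_Ring) (nu : V -> dfun) (A : V -> Prop) : Prop :=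
  (exists q, A q) /\ exists RA, is_radius V nu A RA /\ in_Dplus RA.

From Stdlib Require Import Reals Lra Lia Classical.
From Coquelicot Require Import Coquelicot.
Open Scope R_scope.

(** Write [q_m = p_m - p].  By (N3), [nu_(p_m) >= tau (nu_(q_m)) (nu_p)].  Strong
    convergence makes [nu_(q_m)] dominate, for large [m], a step function that is
    close to [eps0], and [nu_p] dominates a step function with a jump close to 1.
    Since [tau] is continuous and [tau eps0 G = G], the tails of the [nu_(p_m)] are
    therefore uniformly close to 1 for all large [m]; the finitely many remaining
    [nu_(p_m)] lie in [D^+] individually.  So [x |-> inf_m nu_(p_m)(x)] tends to 1 at
    [+oo], and so does its left limit [R_A], which is thus in [D^+]. *)

Lemma filterlim_at_left_eps (f : R -> R) (x l : R) :
  (forall eps, 0 < eps ->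
     exists d, 0 < d /\ forall t, x - d < t < x -> Rabs (f t - l) < eps) ->
  filterlim f (at_left x) (locally l).
Proof.
  intros Hf. apply filterlim_locally. intros eps.
  destruct (Hf eps (cond_pos eps)) as (d & Hd & Hfd).
  exists (mkposreal d Hd). intros t Ht Htx. apply Hfd.
  change (Rabs (t - x) < d) in Ht. destruct (Rabs_def2 _ _ Ht). lra.
Qed.

Section DistanceDistribution.

Variable F : dfun.
Hypothesis HF : in_Delta F.

Lemma Delta_range x : 0 <= F x <= 1.
Proof. apply (proj1 HF). Qed.

Lemma Delta_le x y : x <= y -> F (Finite x) <= F (Finite y).
Proof. intros Hxy. apply (proj1 (proj2 HF)). exact Hxy. Qed.

Lemma Delta_pinfty : F p_infty = 1.
Proof. now destruct HF as (_ & _ & _ & _ & H1). Qed.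

Lemma Delta_nonpos x : x <= 0 -> F (Finite x) = 0.
Proof.
  intros Hx. pose proof (Delta_le x 0 Hx). pose proof (Delta_range (Finite x)).
  destruct HF as (_ & _ & _ & HF0 & _). lra.
Qed.

End DistanceDistribution.

Lemma Dplus_tail (F : dfun) :
  in_Dplus F -> forall eps, 0 < eps ->
  exists M, forall t, M < t -> 1 - eps < F (Finite t).
Proof.
  intros [_ HF] eps Heps.
  destruct (proj1 (filterlim_locally _ _) HF (mkposreal eps Heps)) as [M HM].
  exists M. intros t Ht. specialize (HM t Ht).
  change (Rabs (F (Finite t) - 1) < eps) in HM. destruct (Rabs_def2 _ _ HM). lra.
Qed.

Lemma Dplus_tail_uniform_finite (F : nat -> dfun) :
  (forall m, in_Dplus (F m)) -> forall eps, 0 < eps -> forall N,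
  exists X, forall m t, (m < N)%nat -> X <= t -> 1 - eps < F m (Finite t).
Proof.
  intros HF eps Heps N. induction N as [|N [X HX]].
  - exists 0. intros m t Hm. lia.
  - destruct (Dplus_tail _ (HF N) eps Heps) as [M HM].
    exists (Rmax X (M + 1)). intros m t Hm Ht.
    pose proof (Rmax_l X (M + 1)). pose proof (Rmax_r X (M + 1)).
    destruct (Nat.eq_dec m N) as [->|Hne].
    + apply HM. lra.
    + apply HX; [lia|lra].
Qed.

Definition step (a c : R) : dfun := fun x =>
  match x with
  | Finite r => if Rle_dec r a then 0 else c
  | p_infty => 1
  | m_infty => 0
  end.

Lemma step_Delta a c : 0 <= a -> 0 <= c <= 1 -> in_Delta (step a c).
Proof.
  intros Ha Hc. split; [|split; [|split; [|split]]].
  - intros [r| |]; simpl; try destruct Rle_dec; lra.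
  - intros [x| |] [y| |] Hxy; simpl in *; try contradiction;
      repeat destruct Rle_dec; lra.
  - intros x. apply filterlim_at_left_eps. intros eps Heps.
    destruct (Rle_dec x a).
    + exists 1. split; [lra|]. intros t Ht. simpl.
      destruct (Rle_dec t a), (Rle_dec x a); try lra.
      rewrite Rminus_0_r, Rabs_R0. exact Heps.
    + exists (x - a). split; [lra|]. intros t Ht. simpl.
      destruct (Rle_dec t a), (Rle_dec x a); try lra.
      rewrite Rminus_diag, Rabs_R0. exact Heps.
  - simpl. destruct Rle_dec; lra.
  - reflexivity.
Qed.

Lemma eps0_Delta : in_Delta eps0.
Proof. apply (step_Delta 0 1); lra. Qed.

Lemma step_le (F : dfun) a c :
  in_Delta F -> c <= F (Finite a) -> dle (step a c) F.
Proof.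
  intros HF Hc [r| |]; simpl.
  - destruct (Rle_dec r a); [apply (Delta_range F HF)|].
    pose proof (Delta_le F HF a r). lra.
  - rewrite (Delta_pinfty F HF). lra.
  - apply (Delta_range F HF).
Qed.

Lemma step_continuous a c x :
  a < x -> continuous (fun t => step a c (Finite t)) x.
Proof.
  intros Hx. apply filterlim_locally. intros eps.
  assert (Hd : 0 < x - a) by lra.
  exists (mkposreal (x - a) Hd). intros t Ht.
  change (Rabs (t - x) < x - a) in Ht. destruct (Rabs_def2 _ _ Ht).
  change (Rabs (step a c (Finite t) - step a c (Finite x)) < eps). simpl.
  destruct (Rle_dec t a); [lra|]. destruct (Rle_dec x a); [lra|]. rewrite Rminus_diag, Rabs_R0. apply cond_pos.
Qed.

Lemma weak_cv_const (F : dfun) : weak_cv (fun _ => F) F.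
Proof. intros x _. apply filterlim_const. Qed.

Lemma weak_cv_step_eps0 (l : nat -> R) :
  (forall n, 0 < l n) -> is_lim_seq l 0 ->
  weak_cv (fun n => step (l n) (1 - l n)) eps0.
Proof.
  intros Hpos Hl x _.
  apply (proj2 (is_lim_seq_Reals _ _)). intros e He. unfold R_dist.
  destruct (Rle_dec x 0) as [Hx|Hx].
  - exists 0%nat. intros n _. pose proof (Hpos n). simpl.
    destruct (Rle_dec x (l n)); [|lra]. destruct (Rle_dec x 0); [|lra].
    rewrite Rminus_0_r, Rabs_R0. exact He.
  - destruct (proj1 (is_lim_seq_Reals _ _) Hl (Rmin x e)) as [N HN].
    { apply Rmin_pos; lra. }
    exists N. intros n Hn. specialize (HN n Hn). unfold R_dist in HN.
    pose proof (Hpos n). pose proof (Rmin_l x e). pose proof (Rmin_r x e).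
    rewrite Rminus_0_r, Rabs_pos_eq in HN by lra. simpl.
    destruct (Rle_dec x (l n)); [lra|]. destruct (Rle_dec x 0); [lra|].
    apply Rabs_def1; lra.
Qed.

Lemma is_lim_seq_inv_INR_shift : is_lim_seq (fun n => / INR (n + 2)) 0.
Proof.
  change (Finite 0) with (Rbar_inv p_infty).
  apply is_lim_seq_inv; [|discriminate].
  apply (is_lim_seq_incr_n INR 2 p_infty), is_lim_seq_INR.
Qed.

Section TriangleFunction.

Variable tau : dfun -> dfun -> dfun.
Hypothesis Htau : triangle_function tau.

Lemma tf_le F F' G G' :
  in_Delta F -> in_Delta F' -> in_Delta G -> in_Delta G' ->
  dle F F' -> dle G G' -> dle (tau F G) (tau F' G').
Proof.
  destruct Htau as (_ & _ & Hcomm & Hmono & _).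
  intros HF HF' HG HG' HFF' HGG' x.
  apply Rle_trans with (tau F' G x); [now apply Hmono|].
  rewrite (Hcomm F' G HF' HG x), (Hcomm F' G' HF' HG' x).
  now apply Hmono.
Qed.

Lemma tf_eps0_l G : in_Delta G -> deq (tau eps0 G) G.
Proof.
  destruct Htau as (_ & _ & Hcomm & _ & Hunit).
  intros HG x. rewrite (Hcomm _ _ eps0_Delta HG x). now apply Hunit.
Qed.

(** Continuity of [tau] at [(eps0, G)], evaluated at a continuity point of [G]. *)
Lemma tf_step_approx G x eps :
  tf_continuous tau -> in_Delta G -> continuous (fun t => G (Finite t)) x ->
  0 < eps ->
  exists l, 0 < l < 1 /\ G (Finite x) - eps < tau (step l (1 - l)) G (Finite x).
Proof.
  intros Hcont HG HGx Heps.
  set (l := fun n => / INR (n + 2)).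
  assert (Hl : forall n, 0 < l n < 1).
  { intros n. assert (1 < INR (n + 2)) by (apply lt_1_INR; lia). unfold l.
    split; [apply Rinv_0_lt_compat; lra|].
    rewrite <- Rinv_1. apply Rinv_lt_contravar; lra. }
  assert (Hsteps : forall n, in_Delta (step (l n) (1 - l n))).
  { intros n. specialize (Hl n). apply step_Delta; lra. }
  assert (Hw := Hcont _ _ _ _ Hsteps (fun _ => HG) eps0_Delta HG
    (weak_cv_step_eps0 l (fun n => proj1 (Hl n)) is_lim_seq_inv_INR_shift)
    (weak_cv_const G)).
  assert (HGx' : continuous (fun t => tau eps0 G (Finite t)) x).
  { apply (continuous_ext (fun t => G (Finite t))); [|exact HGx].
    intros t. symmetry. now apply tf_eps0_l. }
  destruct (proj1 (is_lim_seq_Reals _ _) (Hw x HGx') eps Heps) as [N HN].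
  exists (l N). split; [apply Hl|].
  specialize (HN N (Nat.le_refl N)). unfold R_dist in HN.
  rewrite (tf_eps0_l G HG) in HN. destruct (Rabs_def2 _ _ HN). lra.
Qed.

End TriangleFunction.

Lemma PN_strong_limit_tail (V : ModuleSpace R_Ring) (nu : V -> dfun)
    (tau tau_star : dfun -> dfun -> dfun) (pm : nat -> V) (p : V) :
  PN_space V nu tau tau_star -> in_Dplus (nu p) ->
  strongly_converges V nu pm p ->
  forall eps, 0 < eps -> exists N X, forall m t, (N <= m)%nat -> X <= t ->
    1 - eps < nu (pm m) (Finite t).
Proof.
  intros (Htau & Hcont & _ & _ & _ & HD & _ & _ & Hplus & _) Hp Hconv eps Heps.
  destruct (Dplus_tail _ Hp (eps / 2)) as [M HM]; [lra|].
  set (x0 := Rmax M 0 + 1).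
  assert (Hx0 : 0 < x0 /\ M < x0).
  { pose proof (Rmax_l M 0). pose proof (Rmax_r M 0). unfold x0. lra. }
  set (c := nu p (Finite x0)).
  assert (Hc : 1 - eps / 2 < c) by (apply HM; lra).
  assert (HGp : in_Delta (step x0 c)).
  { apply step_Delta; [lra|]. apply (Delta_range _ (HD p)). }
  destruct (tf_step_approx tau Htau (step x0 c) (2 * x0) (eps / 2))
    as (l & Hl & Hnear); auto; [apply step_continuous; lra|lra|].
  simpl in Hnear. destruct (Rle_dec (2 * x0) x0); [lra|].
  destruct (Hconv l (proj1 Hl)) as [N HN].
  exists N, (2 * x0). intros m t Hm Ht.
  set (q := minus (pm m) p).
  assert (Hqp : plus q p = pm m).
  { unfold q, minus. now rewrite <- plus_assoc, plus_opp_l, plus_zero_r. }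
  assert (Hq : dle (step l (1 - l)) (nu q)).
  { apply step_le; [apply HD|]. specialize (HN m Hm). fold q in HN. lra. }
  assert (Hpc : dle (step x0 c) (nu p)) by (apply step_le; [apply HD|apply Rle_refl]).
  assert (Hsum : tau (step l (1 - l)) (step x0 c) (Finite (2 * x0))
                 <= nu (pm m) (Finite (2 * x0))).
  { apply Rle_trans with (tau (nu q) (nu p) (Finite (2 * x0))).
    - apply (tf_le tau Htau); auto. apply step_Delta; lra.
    - rewrite <- Hqp. apply Hplus. }
  pose proof (Delta_le _ (HD (pm m)) _ _ Ht). lra.
Qed.

(** For nondecreasing [f] this is the left limit [l^- f] of the paper. *)
Definition left_sup (f : R -> R) : dfun := fun x =>
  match x with
  | Finite r => real (Lub_Rbar (fun y => exists t, t < r /\ y = f t))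
  | p_infty => 1
  | m_infty => 0
  end.

Section LeftSup.

Variable f : R -> R.
Hypothesis Hf : forall t, 0 <= f t <= 1.

Lemma left_sup_is_lub r :
  is_lub_Rbar (fun y => exists t, t < r /\ y = f t) (left_sup f (Finite r)).
Proof.
  simpl. set (E := fun y => exists t, t < r /\ y = f t).
  destruct (Lub_Rbar_correct E) as [Hub Hlub].
  assert (Hlow : Rbar_le (f (r - 1)) (Lub_Rbar E)).
  { apply Hub. exists (r - 1). split; [lra|reflexivity]. }
  assert (Hup : Rbar_le (Lub_Rbar E) 1).
  { apply Hlub. intros y (t & _ & ->). apply Hf. }
  destruct (Lub_Rbar E); simpl in Hlow, Hup; try contradiction.
  now split.
Qed.

Lemma left_sup_ub r t : t < r -> f t <= left_sup f (Finite r).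
Proof.
  intros Ht. destruct (left_sup_is_lub r) as [Hub _]. apply Hub. now exists t.
Qed.

Lemma left_sup_least r b :
  (forall t, t < r -> f t <= b) -> left_sup f (Finite r) <= b.
Proof.
  intros Hb. destruct (left_sup_is_lub r) as [_ Hlub].
  apply (Hlub (Finite b)). intros y (t & Ht & ->). now apply Hb.
Qed.

Lemma left_sup_approx r eps :
  0 < eps -> exists t, t < r /\ left_sup f (Finite r) - eps < f t.
Proof.
  intros Heps. apply NNPP. intros Hnot.
  assert (left_sup f (Finite r) <= left_sup f (Finite r) - eps); [|lra].
  apply left_sup_least. intros t Ht. apply Rnot_lt_le.
  intros Hlt. apply Hnot. now exists t.
Qed.

Lemma left_sup_range x : 0 <= left_sup f x <= 1.
Proof.
  destruct x as [r| |]; simpl; try lra. split.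
  - apply Rle_trans with (f (r - 1)); [apply Hf|]. apply left_sup_ub. lra.
  - apply left_sup_least. intros t _. apply Hf.
Qed.

Lemma left_sup_le x y : x <= y -> left_sup f (Finite x) <= left_sup f (Finite y).
Proof.
  intros Hxy. apply left_sup_least. intros t Ht. apply left_sup_ub. lra.
Qed.

Lemma left_sup_left_continuous x :
  filterlim (fun t => left_sup f (Finite t)) (at_left x) (locally (left_sup f (Finite x))).
Proof.
  apply filterlim_at_left_eps. intros eps Heps.
  destruct (left_sup_approx x eps Heps) as (t0 & Ht0 & Hnear).
  exists (x - t0). split; [lra|]. intros t Ht.
  pose proof (left_sup_le t x (Rlt_le _ _ (proj2 Ht))).
  pose proof (left_sup_ub t t0 ltac:(lra)).
  apply Rabs_def1; lra.
Qed.

Lemma filterlim_left_sup x :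
  (forall s t, s <= t -> f s <= f t) ->
  filterlim f (at_left x) (locally (left_sup f (Finite x))).
Proof.
  intros Hmono. apply filterlim_at_left_eps. intros eps Heps.
  destruct (left_sup_approx x eps Heps) as (t0 & Ht0 & Hnear).
  exists (x - t0). split; [lra|]. intros t Ht.
  pose proof (left_sup_ub x t (proj2 Ht)). pose proof (Hmono t0 t ltac:(lra)).
  apply Rabs_def1; lra.
Qed.

Lemma left_sup_nonpos x :
  (forall t, t < 0 -> f t = 0) -> x <= 0 -> left_sup f (Finite x) = 0.
Proof.
  intros Hneg Hx. apply Rle_antisym; [|apply (left_sup_range (Finite x))].
  apply left_sup_least. intros t Ht. rewrite Hneg by lra. lra.
Qed.

Lemma left_sup_pinfty :
  (forall eps, 0 < eps -> exists X, forall t, X <= t -> 1 - eps < f t) ->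
  filterlim (fun t => left_sup f (Finite t)) (Rbar_locally p_infty) (locally 1).
Proof.
  intros Htight. apply filterlim_locally. intros eps.
  destruct (Htight eps (cond_pos eps)) as [X HX].
  exists (X + 1). intros t Ht.
  pose proof (left_sup_ub t X ltac:(lra)). pose proof (HX X (Rle_refl X)).
  pose proof (left_sup_range (Finite t)).
  change (Rabs (left_sup f (Finite t) - 1) < eps). apply Rabs_def1; simpl in *; lra.
Qed.

Lemma left_sup_Dplus :
  (forall t, t < 0 -> f t = 0) ->
  (forall eps, 0 < eps -> exists X, forall t, X <= t -> 1 - eps < f t) ->
  in_Dplus (left_sup f).
Proof.
  intros Hneg Htight. split; [split; [|split; [|split; [|split]]]|].
  - exact left_sup_range.
  - intros [x| |] [y| |] Hxy; simpl in Hxy; try contradiction;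
      try apply left_sup_le; try apply left_sup_range; simpl; lra.
  - exact left_sup_left_continuous.
  - apply left_sup_nonpos; [exact Hneg|lra].
  - reflexivity.
  - now apply left_sup_pinfty.
Qed.

End LeftSup.

Section InfNu.

Variables (V : ModuleSpace R_Ring) (nu : V -> dfun) (A : V -> Prop).
Hypothesis HD : forall q, in_Delta (nu q).
Hypothesis HA : exists q, A q.

Lemma inf_nu_is_glb x :
  is_glb_Rbar (fun y => exists q, A q /\ y = nu q (Finite x)) (inf_nu V nu A x).
Proof.
  unfold inf_nu. set (E := fun y => exists q, A q /\ y = nu q (Finite x)).
  destruct HA as [q0 Hq0].
  destruct (Glb_Rbar_correct E) as [Hlb Hglb].
  assert (Hlow : Rbar_le 0 (Glb_Rbar E)).
  { apply Hglb. intros y (q & _ & ->). apply (Delta_range _ (HD q)). }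
  assert (Hup : Rbar_le (Glb_Rbar E) (nu q0 (Finite x))).
  { apply Hlb. now exists q0. }
  destruct (Glb_Rbar E); simpl in Hlow, Hup; try contradiction.
  now split.
Qed.

Lemma inf_nu_le q x : A q -> inf_nu V nu A x <= nu q (Finite x).
Proof.
  intros Hq. destruct (inf_nu_is_glb x) as [Hlb _]. apply Hlb. now exists q.
Qed.

Lemma inf_nu_greatest x b :
  (forall q, A q -> b <= nu q (Finite x)) -> b <= inf_nu V nu A x.
Proof.
  intros Hb. destruct (inf_nu_is_glb x) as [_ Hglb].
  apply (Hglb (Finite b)). intros y (q & Hq & ->). now apply Hb.
Qed.

Lemma inf_nu_range x : 0 <= inf_nu V nu A x <= 1.
Proof.
  destruct HA as [q0 Hq0]. split.
  - apply inf_nu_greatest. intros q _. apply (Delta_range _ (HD q)).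
  - apply Rle_trans with (nu q0 (Finite x)); [now apply inf_nu_le|].
    apply (Delta_range _ (HD q0)).
Qed.

Lemma inf_nu_monotone x y : x <= y -> inf_nu V nu A x <= inf_nu V nu A y.
Proof.
  intros Hxy. apply inf_nu_greatest. intros q Hq.
  apply Rle_trans with (nu q (Finite x)); [now apply inf_nu_le|].
  now apply Delta_le.
Qed.

Lemma inf_nu_nonpos x : x <= 0 -> inf_nu V nu A x = 0.
Proof.
  intros Hx. destruct HA as [q0 Hq0]. apply Rle_antisym.
  - rewrite <- (Delta_nonpos _ (HD q0) x Hx). now apply inf_nu_le.
  - apply inf_nu_range.
Qed.

Lemma D_bounded_of_tight :
  (forall eps, 0 < eps ->
     exists X, forall q t, A q -> X <= t -> 1 - eps < nu q (Finite t)) ->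
  D_bounded V nu A.
Proof.
  intros Htight. split; [exact HA|].
  exists (left_sup (inf_nu V nu A)). split; [split; [|split; [|split]]|].
  - intros x _. apply filterlim_left_sup; [apply inf_nu_range|apply inf_nu_monotone].
  - reflexivity.
  - intros x Hx. apply left_sup_nonpos; [apply inf_nu_range| |lra].
    intros t Ht. apply inf_nu_nonpos. lra.
  - reflexivity.
  - apply left_sup_Dplus; [apply inf_nu_range| |].
    + intros t Ht. apply inf_nu_nonpos. lra.
    + intros eps Heps. destruct (Htight (eps / 2)) as [X HX]; [lra|].
      exists X. intros t Ht.
      assert (1 - eps / 2 <= inf_nu V nu A t); [|lra].
      apply inf_nu_greatest. intros q Hq. left. now apply HX.
Qed.

End InfNu.

Theorem theorem22 (V : ModuleSpace R_Ring) (nu : V -> dfun)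
    (tau tau_star : dfun -> dfun -> dfun) :
  PN_space V nu tau tau_star ->
  (forall p : V, in_Dplus (nu p)) ->
  (forall F G, in_Dplus F -> in_Dplus G -> in_Dplus (tau F G)) ->
  forall (pm : nat -> V) (p : V),
    strongly_converges V nu pm p ->
    D_bounded V nu (fun q => exists m : nat, q = pm m).
Proof.
  intros HPN HDp _ pm p Hconv.
  apply D_bounded_of_tight.
  - intros q. apply HDp.
  - exists (pm 0%nat), 0%nat. reflexivity.
  - intros eps Heps.
    destruct (PN_strong_limit_tail V nu tau tau_star pm p HPN (HDp p) Hconv eps Heps)
      as (N & X1 & HX1).
    destruct (Dplus_tail_uniform_finite (fun m => nu (pm m)) (fun m => HDp (pm m))
      eps Heps N) as [X2 HX2].
    exists (Rmax X1 X2). intros q t [m ->] Ht.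
    pose proof (Rmax_l X1 X2). pose proof (Rmax_r X1 X2).
    destruct (Compare_dec.le_lt_dec N m).
    + apply HX1; [assumption|lra].
    + apply HX2; [assumption|lra].
Qed.
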